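(* The equation $$((a\to b)\to(c\to b))\cap(a\to c)\cap(b\to a)\le c\to a$$ holds in every orthomodular lattice admitting a strong set of states, but fails in the orthomodular lattice MG1.
   Context: Write $a\to b=a'\cup(a\cap b)$. A state on an ortholattice $L$ is a map $m:L\to[0,1]$ with $m(1)=1$ and $a\le b'\Rightarrow m(a\cup b)=m(a)+m(b)$. $L$ admits a strong set of states if there is a nonempty set $S$ of states such that for all $a,b\in L$ with $a\not\le b$ some $m\in S$ has $m(a)=1$ and $m(b)\ne1$. MG1 is the orthomodular lattice of the Greechie diagram with 19 atoms $v,e_1,e_2,e_3,a_1,a_2,a_3,b_1,b_2,b_3,c_1,c_2,c_3,d_1,d_2,d_3,f_1,f_2,u$ and 11 three-atom blocks: $\{v,e_1,a_1\}$, $\{v,e_2,a_2\}$, $\{v,e_3,a_3\}$, $\{a_1,b_1,c_1\}$, $\{a_2,b_2,c_2\}$, $\{a_3,b_3,c_3\}$, $\{b_1,b_2,b_3\}$, $\{c_1,f_1,d_1\}$, $\{c_2,f_2,d_2\}$, $\{c_3,u,d_3\}$, $\{d_1,d_2,d_3\}$. That is, it is the unique orthomodular lattice whose atoms are these and whose maximal Boolean subalgebras are generated by these blocks; each block consists of mutually orthogonal atoms with join $1$. *)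

From Stdlib Require Import Reals List Bool.
Import ListNotations.
Open Scope R_scope.

Record OLops := {
  car   : Type;
  ojoin : car -> car -> car;
  omeet : car -> car -> car;
  ocompl: car -> car;
  ozero : car;
  oone  : car
}.

Definition ole (L : OLops) (a b : car L) : Prop := omeet L a b = a.

Definition is_ortholattice (L : OLops) : Prop :=
  (forall a b, ojoin L a b = ojoin L b a) /\
  (forall a b, omeet L a b = omeet L b a) /\
  (forall a b c, ojoin L a (ojoin L b c) = ojoin L (ojoin L a b) c) /\
  (forall a b c, omeet L a (omeet L b c) = omeet L (omeet L a b) c) /\
  (forall a b, ojoin L a (omeet L a b) = a) /\
  (forall a b, omeet L a (ojoin L a b) = a) /\
  (forall a, ole L (ozero L) a) /\
  (forall a, ole L a (oone L)) /\
  (forall a, ocompl L (ocompl L a) = a) /\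
  (forall a b, ole L a b -> ole L (ocompl L b) (ocompl L a)) /\
  (forall a, omeet L a (ocompl L a) = ozero L) /\
  (forall a, ojoin L a (ocompl L a) = oone L).

Definition is_OML (L : OLops) : Prop :=
  is_ortholattice L /\
  (forall a b, ole L a b -> b = ojoin L a (omeet L b (ocompl L a))).

Definition oimp (L : OLops) (a b : car L) : car L :=
  ojoin L (ocompl L a) (omeet L a b).

Definition is_state (L : OLops) (m : car L -> R) : Prop :=
  (forall a, 0 <= m a <= 1) /\
  m (oone L) = 1 /\
  (forall a b, ole L a (ocompl L b) -> m (ojoin L a b) = m a + m b).

Definition admits_strong_set_of_states (L : OLops) : Prop :=
  exists S : (car L -> R) -> Prop,
    (exists m, S m) /\
    (forall m, S m -> is_state L m) /\
    (forall a b, ~ ole L a b -> exists m, S m /\ m a = 1 /\ m b <> 1).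

Definition eqn_holds_at (L : OLops) (a b c : car L) : Prop :=
  ole L (omeet L (omeet L (oimp L (oimp L a b) (oimp L c b)) (oimp L a c))
                 (oimp L b a))
        (oimp L c a).

Inductive atom : Set :=
  v | e1 | e2 | e3 | a1 | a2 | a3 | b1 | b2 | b3 | c1 | c2 | c3
  | d1 | d2 | d3 | f1 | f2 | u.

Scheme Equality for atom.

Definition all_atoms : list atom :=
  [v; e1; e2; e3; a1; a2; a3; b1; b2; b3; c1; c2; c3; d1; d2; d3; f1; f2; u].

Definition MG1_blocks : list (atom * atom * atom) :=
  [(v, e1, a1); (v, e2, a2); (v, e3, a3);
   (a1, b1, c1); (a2, b2, c2); (a3, b3, c3);
   (b1, b2, b3);
   (c1, f1, d1); (c2, f2, d2); (c3, u, d3);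
   (d1, d2, d3)].

Definition in_block (x : atom) (bl : atom * atom * atom) : bool :=
  match bl with (p, q, r) => atom_beq x p || atom_beq x q || atom_beq x r end.

Definition orth (x y : atom) : bool :=
  negb (atom_beq x y) &&
  existsb (fun bl => in_block x bl && in_block y bl) MG1_blocks.

(* Elements of the Greechie lattice with 3-atom blocks:
   0, 1, the atoms x, and their orthocomplements x' (coatoms). *)
Inductive MG1_elt : Set :=
  | Zero | One | At (x : atom) | Co (x : atom).

Definition MG1_elts : list MG1_elt :=
  [Zero; One] ++ map At all_atoms ++ map Co all_atoms.

Definition MG1_leb (p q : MG1_elt) : bool :=
  match p, q with
  | Zero, _ => true
  | _, One => true
  | At x, At y => atom_beq x y
  | At x, Co y => orth x y
  | Co x, Co y => atom_beq x y
  | _, _ => false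
  end.

Definition MG1_compl (p : MG1_elt) : MG1_elt :=
  match p with Zero => One | One => Zero | At x => Co x | Co x => At x end.

Definition MG1_join (p q : MG1_elt) : MG1_elt :=
  let ub w := MG1_leb p w && MG1_leb q w in
  match find (fun w => ub w && forallb (fun w' => negb (ub w') || MG1_leb w w') MG1_elts)
             MG1_elts with
  | Some w => w | None => One end.

Definition MG1_meet (p q : MG1_elt) : MG1_elt :=
  let lb w := MG1_leb w p && MG1_leb w q in
  match find (fun w => lb w && forallb (fun w' => negb (lb w') || MG1_leb w' w) MG1_elts)
             MG1_elts with
  | Some w => w | None => Zero end.

Definition MG1 : OLops := {|
  car := MG1_elt;
  ojoin := MG1_join;
  omeet := MG1_meet;
  ocompl := MG1_compl;
  ozero := Zero;
  oone := One
|}.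

From Pilot Require Import Defs.
From Stdlib Require Import Reals Lra Classical List Bool.
Open Scope R_scope.

(* Let m be a state that is 1 on the left-hand side of the
   equation.  On an ortholattice every state satisfies
   m(x -> y) = 1 - m(x) + m(x ∩ y), so m(x -> y) = 1 iff m(x ∩ y) = m(x);
   on an orthomodular lattice states are monotone, so every conjunct of the
   left-hand side also has value 1.  A short inequality chase then gives m(c ∩ a) = m(c),
   i.e. m(c -> a) = 1.  A strong set of states determines the order
   ("a <= b as soon as every state of the set that is 1 on a is 1 on b"),
   so the equation holds.

   The carrier of MG1 is finite and its order is boolean,
   so every first-order property with at most three universally quantified
   elements is checked by evaluation. *)

Section OrthoStates.

Variable L : OLops.
Hypothesis HL : is_ortholattice L.

Notation j := (ojoin L).
Notation mt := (omeet L).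
Notation cp := (ocompl L).

Lemma meet_comm a b : mt a b = mt b a.
Proof. apply HL. Qed.

Lemma meet_idem a : mt a a = a.
Proof.
  destruct HL as (_ & _ & _ & _ & Habs1 & Habs2 & _).
  rewrite <- (Habs1 a a) at 2. apply Habs2.
Qed.

Lemma meet_le_l a b : ole L (mt a b) a.
Proof.
  unfold ole. rewrite meet_comm.
  destruct HL as (_ & _ & _ & Hassoc & _).
  rewrite Hassoc, meet_idem. reflexivity.
Qed.

Lemma meet_le_r a b : ole L (mt a b) b.
Proof. rewrite meet_comm. apply meet_le_l. Qed.

Lemma compl_invol a : cp (cp a) = a.
Proof. apply HL. Qed.

Lemma compl_antitone a b : ole L a b -> ole L (cp b) (cp a).
Proof. apply HL. Qed.

Lemma le_orth a b : ole L a b -> ole L a (cp (cp b)).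
Proof. rewrite compl_invol. trivial. Qed.

Variable m : car L -> R.
Hypothesis Hm : is_state L m.

Lemma state_range a : 0 <= m a <= 1.
Proof. apply Hm. Qed.

Lemma state_compl a : m (cp a) = 1 - m a.
Proof.
  destruct Hm as (_ & Hone & Hadd).
  assert (Hsum : m (j a (cp a)) = m a + m (cp a))
    by (apply Hadd, le_orth, meet_idem).
  destruct HL as (_ & _ & _ & _ & _ & _ & _ & _ & _ & _ & _ & Hjoin).
  rewrite Hjoin, Hone in Hsum. lra.
Qed.

(* The value of the Sasaki-type implication [a -> b] = a' ∪ (a ∩ b):
   its two joinands are orthogonal. *)
Lemma state_imp a b : m (oimp L a b) = 1 - m a + m (mt a b).
Proof.
  destruct Hm as (_ & _ & Hadd). unfold oimp.
  rewrite Hadd by apply compl_antitone, meet_le_l.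
  rewrite state_compl. reflexivity.
Qed.

Lemma state_imp_one a b : m (oimp L a b) = 1 <-> m (mt a b) = m a.
Proof. rewrite state_imp. lra. Qed.

Section Orthomodular.

Hypothesis HOM : forall a b, ole L a b -> b = j a (mt b (cp a)).

(* In an orthomodular lattice [b] splits as [a ∪ (b ∩ a')] with orthogonal
   parts, hence states are monotone. *)
Lemma state_monotone a b : ole L a b -> m a <= m b.
Proof.
  intro Hab. destruct Hm as (_ & _ & Hadd).
  rewrite (HOM a b Hab), Hadd.
  - pose proof (state_range (mt b (cp a))). lra.
  - rewrite <- (compl_invol a) at 1. apply compl_antitone, meet_le_r.
Qed.

Lemma state_meet_one a b : m (mt a b) = 1 -> m a = 1 /\ m b = 1.
Proof.
  intro H.
  pose proof (state_monotone _ _ (meet_le_l a b)).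
  pose proof (state_monotone _ _ (meet_le_r a b)).
  pose proof (state_range a). pose proof (state_range b). lra.
Qed.

Lemma state_eqn a b c :
  m (mt (mt (oimp L (oimp L a b) (oimp L c b)) (oimp L a c)) (oimp L b a)) = 1 ->
  m (oimp L c a) = 1.
Proof.
  intro H.
  destruct (state_meet_one _ _ H) as [Hfirst Hba].
  destruct (state_meet_one _ _ Hfirst) as [Himp Hac].
  rewrite state_imp_one in Himp, Hac, Hba. rewrite state_imp_one.
  assert (Hmono : m (oimp L a b) <= m (oimp L c b)).
  { rewrite <- Himp. apply state_monotone, meet_le_r. }
  rewrite !state_imp in Hmono.
  pose proof (state_monotone _ _ (meet_le_r c b)).
  pose proof (state_monotone _ _ (meet_le_l c a)).
  rewrite (meet_comm b a) in Hba. rewrite (meet_comm c a) in *.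
  lra.
Qed.

End Orthomodular.

End OrthoStates.

Lemma strong_states_order (L : OLops) (S : (car L -> R) -> Prop) (a b : car L) :
  (forall a b, ~ ole L a b -> exists m, S m /\ m a = 1 /\ m b <> 1) ->
  (forall m, S m -> m a = 1 -> m b = 1) ->
  ole L a b.
Proof.
  intros Hstrong Hval. apply NNPP. intro Hnle.
  destruct (Hstrong a b Hnle) as (m & Sm & Ha & Hb).
  exact (Hb (Hval m Sm Ha)).
Qed.

Theorem eqn_holds_with_strong_states (L : OLops) :
  is_OML L -> admits_strong_set_of_states L ->
  forall a b c : car L, eqn_holds_at L a b c.
Proof.
  intros [HOL HOM] (S & _ & HS & Hstrong) a b c.
  apply (strong_states_order L S); [exact Hstrong |].
  intros m Sm. apply (state_eqn L HOL m (HS m Sm) HOM).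
Qed.

Section OrthoFromOrder.

Variable L : OLops.
Variable le : car L -> car L -> Prop.

Notation j := (ojoin L).
Notation mt := (omeet L).
Notation cp := (ocompl L).

Hypothesis le_refl : forall a, le a a.
Hypothesis le_antisym : forall a b, le a b -> le b a -> a = b.
Hypothesis le_trans : forall a b c, le a b -> le b c -> le a c.
Hypothesis join_ub_l : forall a b, le a (j a b).
Hypothesis join_ub_r : forall a b, le b (j a b).
Hypothesis join_least : forall a b c, le a c -> le b c -> le (j a b) c.
Hypothesis meet_lb_l : forall a b, le (mt a b) a.
Hypothesis meet_lb_r : forall a b, le (mt a b) b.
Hypothesis meet_greatest : forall a b c, le c a -> le c b -> le c (mt a b).
Hypothesis zero_least : forall a, le (ozero L) a.
Hypothesis one_greatest : forall a, le a (oone L).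
Hypothesis cp_invol : forall a, cp (cp a) = a.
Hypothesis cp_antitone : forall a b, le a b -> le (cp b) (cp a).
Hypothesis meet_compl : forall a, le (mt a (cp a)) (ozero L).
Hypothesis join_compl : forall a, le (oone L) (j a (cp a)).

Lemma ole_iff_le a b : ole L a b <-> le a b.
Proof.
  unfold ole. split.
  - intro H. rewrite <- H. apply meet_lb_r.
  - intro H. apply le_antisym; [apply meet_lb_l | apply meet_greatest; auto].
Qed.

Lemma ortholattice_of_order : is_ortholattice L.
Proof.
  unfold is_ortholattice.
  repeat split; intros; repeat rewrite ole_iff_le in *.
  - apply le_antisym; apply join_least; auto.
  - apply le_antisym; apply meet_greatest; auto.
  - apply le_antisym; repeat apply join_least; eauto.
  - apply le_antisym; repeat apply meet_greatest; eauto.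
  - apply le_antisym; auto.
  - apply le_antisym; auto.
  - auto.
  - auto.
  - auto.
  - auto.
  - apply le_antisym; auto.
  - apply le_antisym; auto.
Qed.

Lemma OML_of_order :
  (forall a b, le a b -> le b (j a (mt b (cp a)))) -> is_OML L.
Proof.
  intro HOM. split; [exact ortholattice_of_order |].
  intros a b Hab. rewrite ole_iff_le in Hab.
  apply le_antisym; auto.
Qed.

End OrthoFromOrder.

Section Enumeration.

Variable T : Type.
Variable elts : list T.
Hypothesis elts_complete : forall x, In x elts.

Lemma forall_of_check1 (f : T -> bool) :
  forallb f elts = true -> forall x, f x = true.
Proof. rewrite forallb_forall. auto. Qed.

Lemma forall_of_check2 (f : T -> T -> bool) :
  forallb (fun x => forallb (f x) elts) elts = true -> forall x y, f x y = true.
Proof. intros H x. apply forall_of_check1, (forall_of_check1 _ H). Qed.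

Lemma forall_of_check3 (f : T -> T -> T -> bool) :
  forallb (fun x => forallb (fun y => forallb (f x y) elts) elts) elts = true ->
  forall x y z, f x y z = true.
Proof. intros H x. apply forall_of_check2, (forall_of_check1 _ H). Qed.

End Enumeration.

Lemma MG1_elts_complete (p : MG1_elt) : In p MG1_elts.
Proof. destruct p as [| |x|x]; try destruct x; vm_compute; tauto. Qed.

Definition MG1_eq_dec (p q : MG1_elt) : {p = q} + {p <> q}.
Proof. decide equality; apply atom_eq_dec. Defined.

Definition MG1_le (p q : MG1_elt) : Prop := MG1_leb p q = true.

Ltac check_MG1 n :=
  match n with
  | 1 => apply (forall_of_check1 _ _ MG1_elts_complete)
  | 2 => apply (forall_of_check2 _ _ MG1_elts_complete)
  | 3 => apply (forall_of_check3 _ _ MG1_elts_complete)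
  end; vm_compute; reflexivity.

Lemma MG1_le_refl p : MG1_le p p.
Proof. unfold MG1_le. revert p. check_MG1 1. Qed.

Lemma MG1_le_antisym p q : MG1_le p q -> MG1_le q p -> p = q.
Proof.
  assert (Hchk : forall p q, implb (MG1_leb p q && MG1_leb q p)
                   (if MG1_eq_dec p q then true else false) = true) by check_MG1 2.
  unfold MG1_le. intros Hpq Hqp. specialize (Hchk p q).
  rewrite Hpq, Hqp in Hchk. destruct (MG1_eq_dec p q); easy.
Qed.

Lemma MG1_le_trans p q r : MG1_le p q -> MG1_le q r -> MG1_le p r.
Proof.
  assert (Hchk : forall p q r, implb (MG1_leb p q && MG1_leb q r) (MG1_leb p r) = true)
    by check_MG1 3.
  unfold MG1_le. intros Hpq Hqr. specialize (Hchk p q r).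
  rewrite Hpq, Hqr in Hchk. exact Hchk.
Qed.

Definition MG1_is_lub (p q w : MG1_elt) : bool :=
  MG1_leb p w && MG1_leb q w &&
  forallb (fun r => implb (MG1_leb p r && MG1_leb q r) (MG1_leb w r)) MG1_elts.

Definition MG1_is_glb (p q w : MG1_elt) : bool :=
  MG1_leb w p && MG1_leb w q &&
  forallb (fun r => implb (MG1_leb r p && MG1_leb r q) (MG1_leb r w)) MG1_elts.

Lemma MG1_is_lubP p q w :
  MG1_is_lub p q w = true ->
  MG1_le p w /\ MG1_le q w /\ (forall r, MG1_le p r -> MG1_le q r -> MG1_le w r).
Proof.
  unfold MG1_is_lub, MG1_le. rewrite !andb_true_iff, forallb_forall.
  intros ((Hp & Hq) & Hleast). repeat split; trivial.
  intros r Hpr Hqr. apply (proj1 (implb_true_iff _ _) (Hleast r (MG1_elts_complete r))).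
  rewrite Hpr, Hqr. reflexivity.
Qed.

Lemma MG1_is_glbP p q w :
  MG1_is_glb p q w = true ->
  MG1_le w p /\ MG1_le w q /\ (forall r, MG1_le r p -> MG1_le r q -> MG1_le r w).
Proof.
  unfold MG1_is_glb, MG1_le. rewrite !andb_true_iff, forallb_forall.
  intros ((Hp & Hq) & Hgreatest). repeat split; trivial.
  intros r Hrp Hrq. apply (proj1 (implb_true_iff _ _) (Hgreatest r (MG1_elts_complete r))).
  rewrite Hrp, Hrq. reflexivity.
Qed.

Lemma MG1_join_lub p q :
  MG1_le p (MG1_join p q) /\ MG1_le q (MG1_join p q) /\
  (forall r, MG1_le p r -> MG1_le q r -> MG1_le (MG1_join p q) r).
Proof.
  apply MG1_is_lubP. revert p q.
  apply (forall_of_check2 _ _ MG1_elts_complete (fun p q => MG1_is_lub p q (MG1_join p q))).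
  vm_compute. reflexivity.
Qed.

Lemma MG1_meet_glb p q :
  MG1_le (MG1_meet p q) p /\ MG1_le (MG1_meet p q) q /\
  (forall r, MG1_le r p -> MG1_le r q -> MG1_le r (MG1_meet p q)).
Proof.
  apply MG1_is_glbP. revert p q.
  apply (forall_of_check2 _ _ MG1_elts_complete (fun p q => MG1_is_glb p q (MG1_meet p q))).
  vm_compute. reflexivity.
Qed.

Lemma MG1_compl_antitone p q : MG1_le p q -> MG1_le (MG1_compl q) (MG1_compl p).
Proof.
  assert (Hchk : forall p q,
    implb (MG1_leb p q) (MG1_leb (MG1_compl q) (MG1_compl p)) = true) by check_MG1 2.
  unfold MG1_le. intro Hpq. specialize (Hchk p q). rewrite Hpq in Hchk. exact Hchk.
Qed.

Lemma MG1_orthomodular p q :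
  MG1_le p q -> MG1_le q (MG1_join p (MG1_meet q (MG1_compl p))).
Proof.
  assert (Hchk : forall p q,
    implb (MG1_leb p q) (MG1_leb q (MG1_join p (MG1_meet q (MG1_compl p)))) = true)
    by check_MG1 2.
  unfold MG1_le. intro Hpq. specialize (Hchk p q). rewrite Hpq in Hchk. exact Hchk.
Qed.

Theorem MG1_is_OML : is_OML MG1.
Proof.
  apply (OML_of_order MG1 MG1_le).
  - exact MG1_le_refl.
  - exact MG1_le_antisym.
  - exact MG1_le_trans.
  - intros p q. apply (MG1_join_lub p q).
  - intros p q. apply (MG1_join_lub p q).
  - intros p q r. apply (MG1_join_lub p q).
  - intros p q. apply (MG1_meet_glb p q).
  - intros p q. apply (MG1_meet_glb p q).
  - intros p q r. apply (MG1_meet_glb p q).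
  - intro p. reflexivity.
  - intro p. destruct p; reflexivity.
  - intro p. destruct p; reflexivity.
  - exact MG1_compl_antitone.
  - intro p. unfold MG1_le. revert p. check_MG1 1.
  - intro p. unfold MG1_le. revert p. check_MG1 1.
  - exact MG1_orthomodular.
Qed.

Lemma MG1_eqn_fails : ~ eqn_holds_at MG1 (Co Defs.b1) (Co Defs.c2) (Co Defs.d1).
Proof.
  unfold eqn_holds_at. rewrite (ole_iff_le MG1 MG1_le).
  - unfold MG1_le. vm_compute. discriminate.
  - exact MG1_le_refl.
  - exact MG1_le_antisym.
  - intros p q. apply (MG1_meet_glb p q).
  - intros p q. apply (MG1_meet_glb p q).
  - intros p q r. apply (MG1_meet_glb p q).
Qed.

Theorem mainTheorem12 :
  (forall L : OLops, is_OML L -> admits_strong_set_of_states L ->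
     forall a b c : car L, eqn_holds_at L a b c) /\
  (is_OML MG1 /\ exists a b c : car MG1, ~ eqn_holds_at MG1 a b c).
Proof.
  split; [exact eqn_holds_with_strong_states |].
  split; [exact MG1_is_OML |].
  exists (Co Defs.b1), (Co Defs.c2), (Co Defs.d1). exact MG1_eqn_fails.
Qed.
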